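(* Let $n = n(j) = m_1 + m_2 + \cdots + m_j$ with $1 \leq j \leq j_{\max}$ (i.e., $n$ corresponds to the end of the $j$-th block of the deflated block-Krylov matrix). Then, in the Hermitian case described below, the data matrices $\mathcal A_n = \mathcal V_n^H \mathcal A\, \mathcal V_n$, $\mathcal E_n = \mathcal V_n^H \mathcal E\, \mathcal V_n$, $\mathcal B_n = \mathcal V_n^H \mathcal B$, $\mathcal L_n = \mathcal L\, \mathcal V_n$, $\mathcal D_n = \mathcal D$ of the structure-preserving Padé-type model satisfy \[ \mathcal L\, \mathcal M^i\, \mathcal V_n = \mathcal L_n\, \mathcal M_n^i\quad \mbox{for all}\quad i=0,1,\dots,j. \]
   Context: Consider a first-order system $\mathcal E\, \frac{d}{dt} z(t) - \mathcal A\, z(t) = \mathcal B\, u(t)$, $y(t) = \mathcal D\, u(t) + \mathcal L\, z(t)$, with regular pencil $s\mathcal E - \mathcal A$ and transfer function $H(s) = \mathcal D + \mathcal L (s\mathcal E - \mathcal A)^{-1}\mathcal B$, which is the equivalent first-order formulation of one of the following Hermitian systems. (a) A Hermitian special second-order system $P_1 \frac{d}{dt}x + P_0 x + P_{-1}\int_{t_0}^t x\,d\tau = B u$, $y = D u + L x$, with either $P_{-1} = F_1 G F_2^H$ or $P_{-1} = F_1 G^{-1} F_2^H$ ($G$ nonsingular), where Hermitian means $L = B^H$, $P_0 = P_0^H$, $P_1 = P_1^H$, $F_1 = F_2$, $G = G^H$. Here $P_0,P_1\in\mathbb{C}^{N\times N}$, $G\in\mathbb{C}^{N_0\times N_0}$,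 and the first-order data are $\mathcal B = \begin{bmatrix} B\\ 0\end{bmatrix}$, $\mathcal L = \begin{bmatrix} L & 0\end{bmatrix}$, $\mathcal D = D$, and either $\mathcal A = \begin{bmatrix} -P_0 & -F_1 G\\ (F_2G)^H & 0\end{bmatrix}$, $\mathcal E = \begin{bmatrix} P_1 & 0\\ 0 & G^H\end{bmatrix}$ (first case) or $\mathcal A = \begin{bmatrix} -P_0 & -F_1\\ F_2^H & 0\end{bmatrix}$, $\mathcal E = \begin{bmatrix} P_1 & 0\\ 0 & G\end{bmatrix}$ (second case). (b) A Hermitian $l$-th order system $P_l x^{(l)} + \cdots + P_1 x' + P_0 x = B u$, $y = D u + L_{l-1}x^{(l-1)} + \cdots + L_0 x$, where Hermitian means $P_i = P_i^H$ ($0\le i\le l$), $L_0 = B^H$, $L_j = 0$ ($1\le j\le l-1$); the first-order data are the companion form with state $(x, x', \dots, x^{(l-1)})$: $\mathcal E = \mathrm{diag}(I,\dots,I,P_l)$, $\mathcal A = -\begin{bmatrix} 0 & -I & & \\ & \ddots & \ddots & \\ & & 0 & -I\\ P_0 & P_1 & \cdots & P_{l-1}\end{bmatrix}$, $\mathcal B = \begin{bmatrix}0\\ \vdots\\ 0\\ B\end{bmatrix}$, $\mathcal L = \begin{bmatrix} L_0 & L_1 & \cdots & L_{l-1}\end{bmatrix}$, $\mathcal D = D$. Let $s_0 \in \mathbb{R}$ with $s_0\mathcal E - \mathcal A$ nonsingular, and set $\mathcal M = (s_0\mathcal E - \mathcal A)^{-1}\mathcal E$, $\mathcal R = (s_0\mathcal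 E - \mathcal A)^{-1}\mathcal B$. Deflating the block-Krylov matrix $[\mathcal R,\ \mathcal M\mathcal R,\ \mathcal M^2\mathcal R,\dots]$ (deleting columns linearly dependent on earlier ones) gives $[\mathcal R^{(1)},\ \mathcal M\mathcal R^{(2)},\dots,\mathcal M^{j_{\max}-1}\mathcal R^{(j_{\max})}]$ where block $\mathcal R^{(j)}$ has $m_j$ columns; for $n = m_1+\cdots+m_j$, the block-Krylov subspace is $\mathcal K_n(\mathcal M,\mathcal R) = \mathrm{range}[\mathcal R^{(1)}, \mathcal M\mathcal R^{(2)}, \dots, \mathcal M^{j-1}\mathcal R^{(j)}]$. The projection matrix $\mathcal V_n$ is: in case (a), $\mathcal V_n = \begin{bmatrix} V_1 & 0\\ 0 & V_2\end{bmatrix}$, where $\begin{bmatrix} V_1\\ V_2\end{bmatrix}$ ($V_1$ with $N$ rows, $V_2$ with $N_0$ rows) is any matrix whose columns span $\mathcal K_n(\mathcal M,\mathcal R)$ (and $V_2^H G V_2$ is nonsingular); in case (b), $\mathcal V_n = \mathrm{diag}(S_n,\dots,S_n)$ ($l$ copies) with $S_n\in\mathbb{C}^{N\times n}$, $S_n^H S_n = I_n$, chosen so that $\mathcal K_n(\mathcal M,\mathcal R)\subseteq \mathrm{range}\,\mathcal V_n$. The projected pencil $s\mathcal E_n - \mathcal A_n$ is assumed regular and $s_0\mathcal E_n - \mathcal A_n$ nonsingular, and $\mathcal M_n = (s_0\mathcal E_n - \mathcal A_n)^{-1}\mathcal E_n$, $\mathcal R_n = (s_0\mathcal E_n - \mathcal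 A_n)^{-1}\mathcal B_n$. *)

(* Complex scalars: an arbitrary numClosedFieldType C
   (e.g. algC, or R[i] for a real closed field R); conjugation is conjC. *)
From mathcomp Require Import all_boot all_order all_algebra.
Set Implicit Arguments.
Unset Strict Implicit.
Unset Printing Implicit Defensive.
Import Order.TTheory GRing.Theory Num.Theory.
Local Open Scope ring_scope.

Section Generic.
Variable C : numClosedFieldType.

Definition ctr (m n : nat) (A : 'M[C]_(m, n)) : 'M[C]_(n, m) := (map_mx Num.conj A)^T.

Definition regular_pencil (K : nat) (E A : 'M[C]_K) : bool :=
  \det ('X *: map_mx polyC E - map_mx polyC A) != 0.

Variables (K m : nat) (E A : 'M[C]_K) (B : 'M[C]_(K, m)) (s0 : C).

Definition Mmx : 'M[C]_K := invmx (s0 *: E - A) *m E.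
Definition Rmx : 'M[C]_(K, m) := invmx (s0 *: E - A) *m B.

(* the l-th column of M^k R, stored as a row vector (mxalgebra works with row spaces) *)
Definition kv (k : nat) (l : 'I_m) : 'rV[C]_K := (col l (Mmx ^+ k *m Rmx))^T.

(* greedy deflation, scanning the columns of [R, M R, M^2 R, ...] from left to right:
   a column is deleted iff it lies in the span of the columns kept so far *)
Definition defl_step (k : nat) (S : 'M[C]_K) (l : 'I_m) : 'M[C]_K :=
  if (kv k l <= S)%MS then S else (S + kv k l)%MS.

(* span of the kept columns of the first k blocks (blocks 0..k-1, i.e. R, ..., M^(k-1) R) *)
Fixpoint span_upto (k : nat) : 'M[C]_K :=
  match k with
  | 0 => 0
  | k'.+1 => foldl (defl_step k') (span_upto k') (enum 'I_m)
  end.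

Definition span_before (k : nat) (l : 'I_m) : 'M[C]_K :=
  foldl (defl_step k) (span_upto k) [seq l' : 'I_m <- enum 'I_m | (l' < l)%N].

Definition kept (k : nat) (l : 'I_m) : bool := ~~ (kv k l <= span_before k l)%MS.

(* m_{k+1} : number of columns of the (k+1)-th block M^k R^(k+1) of the deflated matrix *)
Definition mblock (k : nat) : nat := #|[pred l | kept k l]|.

Definition nblk (j : nat) : nat := (\sum_(k < j) mblock k)%N.

Definition krylov_row_space (j : nat) : 'M[C]_K := span_upto j.

End Generic.

Definition Mn (C : numClosedFieldType) (K q : nat) (E A : 'M[C]_K) (V : 'M[C]_(K, q))
  (s0 : C) : 'M[C]_q :=
  invmx (s0 *: (ctr V *m E *m V) - ctr V *m A *m V) *m (ctr V *m E *m V).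

Definition moment_identity (C : numClosedFieldType) (K p q : nat) (E A : 'M[C]_K)
  (L : 'M[C]_(p, K)) (V : 'M[C]_(K, q)) (s0 : C) (j : nat) : Prop :=
  forall i : nat, (i <= j)%N ->
    L *m (Mmx E A s0) ^+ i *m V = (L *m V) *m (Mn E A V s0) ^+ i.

Definition common_hyps (C : numClosedFieldType) (K m q : nat) (E A : 'M[C]_K)
  (B : 'M[C]_(K, m)) (V : 'M[C]_(K, q)) (s0 : C) (j : nat) : Prop :=
  s0 \is Num.real /\
  regular_pencil E A /\
  (s0 *: E - A) \in unitmx /\
  (1 <= j)%N /\
  (0 < mblock E A B s0 j.-1)%N /\  (* block j is present, i.e. j <= j_max *)
  regular_pencil (ctr V *m E *m V) (ctr V *m A *m V) /\
  (s0 *: (ctr V *m E *m V) - ctr V *m A *m V) \in unitmx.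

(* companion-form first-order data of an l-th order system, l >= 1 *)
Section Companion.
Variables (C : numClosedFieldType) (l N m p : nat).
Local Notation sz := (\sum_(i < l) N)%N.
Definition is_last (i : 'I_l) : bool := (i.+1 == l)%N.

Definition companE (Pl : 'M[C]_N) : 'M[C]_sz :=
  \mxblock_(i < l, k < l)
     (if i == k then (if is_last i then Pl else 1%:M) else (0 : 'M[C]_N)).

Definition companA (P : 'I_l -> 'M[C]_N) : 'M[C]_sz :=
  - \mxblock_(i < l, k < l)
     (if is_last i then P k
      else if (k == i.+1 :> nat) then - (1%:M : 'M[C]_N) else 0).

Definition companB (B : 'M[C]_(N, m)) : 'M[C]_(sz, m) :=
  \mxcol_(i < l) (if is_last i then B else (0 : 'M[C]_(N, m))).

Definition companL (Ls : 'I_l -> 'M[C]_(p, N)) : 'M[C]_(p, sz) :=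
  \mxrow_(k < l) Ls k.

Definition companV (n : nat) (S : 'M[C]_(N, n)) : 'M[C]_(sz, \sum_(i < l) n) :=
  \mxblock_(i < l, k < l) (if i == k then S else (0 : 'M[C]_(N, n))).
End Companion.

From mathcomp Require Import all_boot all_order all_algebra zify.
Set Implicit Arguments.
Unset Strict Implicit.
Unset Printing Implicit Defensive.
Import Order.TTheory GRing.Theory Num.Theory.
Local Open Scope ring_scope.

(* In each case the Hermitian structure yields a symmetrizer W with W E and W A
   Hermitian and W B = L^H: the signature matrix diag(I, -I) for the second-order
   system, the block Hankel symmetrizer of the companion pencil for the l-th order
   one. As s0 is real, W (s0 E - A) is Hermitian as well, which gives
   (M^i R)^H W (s0 E - A) = L M^i. The projection V_n respects the block structure,
   so V_n^H (W X) V_n = W_n X_n for X = E, A and the symmetrizer W_n of the reduced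
   model. Writing M^i R = V_n X_i for i < j (the Krylov inclusion), we get
   L M^i V_n = X_i^H W_n (s0 E_n - A_n) and L M^(i+1) V_n = X_i^H W_n E_n, hence
   L M^(i+1) V_n = L M^i V_n M_n, and the identity follows by induction on i. *)

Section ConjugateTranspose.
Variable C : numClosedFieldType.

Lemma ctrK m n (A : 'M[C]_(m, n)) : ctr (ctr A) = A.
Proof. by apply/matrixP => i j; rewrite !mxE conjCK. Qed.

Lemma ctr_mul m n p (A : 'M[C]_(m, n)) (B : 'M[C]_(n, p)) :
  ctr (A *m B) = ctr B *m ctr A.
Proof. by rewrite /ctr map_mxM trmx_mul. Qed.

Lemma ctr0 m n : ctr (0 : 'M[C]_(m, n)) = 0.
Proof. by rewrite /ctr map_mx0 trmx0. Qed.

Lemma ctrN m n (A : 'M[C]_(m, n)) : ctr (- A) = - ctr A.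
Proof. by rewrite /ctr map_mxN linearN. Qed.

Lemma ctrB m n (A B : 'M[C]_(m, n)) : ctr (A - B) = ctr A - ctr B.
Proof. by rewrite /ctr map_mxB linearB. Qed.

Lemma ctrZ m n a (A : 'M[C]_(m, n)) : ctr (a *: A) = a^* *: ctr A.
Proof. by rewrite /ctr map_mxZ linearZ. Qed.

Lemma ctr_row_mx m n1 n2 (A1 : 'M[C]_(m, n1)) (A2 : 'M[C]_(m, n2)) :
  ctr (row_mx A1 A2) = col_mx (ctr A1) (ctr A2).
Proof. by rewrite /ctr map_row_mx tr_row_mx. Qed.

Lemma ctr_block_mx m1 m2 n1 n2 (Aul : 'M[C]_(m1, n1)) (Aur : 'M[C]_(m1, n2))
    (Adl : 'M[C]_(m2, n1)) (Adr : 'M[C]_(m2, n2)) :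
  ctr (block_mx Aul Aur Adl Adr) = block_mx (ctr Aul) (ctr Adl) (ctr Aur) (ctr Adr).
Proof. by rewrite /ctr map_block_mx tr_block_mx. Qed.

Lemma ctr_mxrow l m n (B_ : 'I_l -> 'M[C]_(m, n)) :
  ctr (\mxrow_(k < l) B_ k) = \mxcol_(k < l) ctr (B_ k).
Proof. by apply/matrixP => i j; rewrite !mxE. Qed.

Lemma ctr_mxblock l m n (B_ : 'I_l -> 'I_l -> 'M[C]_(m, n)) :
  ctr (\mxblock_(i < l, k < l) B_ i k) = \mxblock_(i < l, k < l) ctr (B_ k i).
Proof. by apply/matrixP => i j; rewrite !mxE. Qed.

End ConjugateTranspose.

Section Symmetrizer.
Variables (C : numClosedFieldType) (K m : nat) (E A W : 'M[C]_K).
Variables (B : 'M[C]_(K, m)) (L : 'M[C]_(m, K)) (s0 : C).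
Variables (q : nat) (V : 'M[C]_(K, q)) (Wn : 'M[C]_q) (j : nat).
Hypotheses (s0_real : s0 \is Num.real) (pencil_unit : (s0 *: E - A) \in unitmx).
Hypotheses (WE_herm : ctr (W *m E) = W *m E) (WA_herm : ctr (W *m A) = W *m A).
Hypothesis WB : W *m B = ctr L.

Local Notation Z := (s0 *: E - A).
Local Notation M := (Mmx E A s0).
Local Notation R := (Rmx E A B s0).

Lemma symmetrized_pencil_herm : ctr (W *m Z) = W *m Z.
Proof. by rewrite mulmxBr -scalemxAr ctrB ctrZ WE_herm WA_herm conj_Creal. Qed.

Lemma ctr_Mmx_symmetrized : ctr M *m (W *m Z) = W *m Z *m M.
Proof.
have WZ_M : W *m Z *m M = W *m E by rewrite /Mmx mulmxA mulmxK.
by rewrite -{1}symmetrized_pencil_herm -ctr_mul WZ_M WE_herm.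
Qed.

Lemma ctr_krylov_symmetrized i : ctr (M ^+ i *m R) *m (W *m Z) = L *m M ^+ i.
Proof.
elim: i => [|i IHi].
  by rewrite expr0 mul1mx -symmetrized_pencil_herm -ctr_mul /Rmx mulmxA mulmxK // WB ctrK mulmx1.
rewrite [in LHS]exprS -mulmxE -mulmxA ctr_mul -mulmxA ctr_Mmx_symmetrized mulmxA IHi.
by rewrite exprSr -mulmxE mulmxA.
Qed.

Hypothesis projected_unit : (s0 *: (ctr V *m E *m V) - ctr V *m A *m V) \in unitmx.
Hypothesis WEn : ctr V *m (W *m E) *m V = Wn *m (ctr V *m E *m V).
Hypothesis WAn : ctr V *m (W *m A) *m V = Wn *m (ctr V *m A *m V).
Hypothesis krylov_in_range : forall i, (i < j)%N ->
  exists X : 'M[C]_(q, m), M ^+ i *m R = V *m X.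

Local Notation En := (ctr V *m E *m V).
Local Notation Zn := (s0 *: En - ctr V *m A *m V).

Lemma projected_symmetrized_pencil : ctr V *m (W *m Z) *m V = Wn *m Zn.
Proof. by rewrite !mulmxBr !mulmxBl -!scalemxAr -!scalemxAl WEn WAn. Qed.

Lemma moment_step i : (i < j)%N ->
  L *m M ^+ i.+1 *m V = L *m M ^+ i *m V *m Mn E A V s0.
Proof.
move=> /krylov_in_range[X MR_X].
have LMi_invZ : L *m M ^+ i *m invmx Z = ctr X *m ctr V *m W.
  by rewrite -ctr_krylov_symmetrized MR_X ctr_mul !mulmxA mulmxK.
have moment_i : L *m M ^+ i *m V = ctr X *m Wn *m Zn.
  rewrite -[RHS]mulmxA -projected_symmetrized_pencil -(mulmxKV pencil_unit (L *m _)) LMi_invZ.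
  by rewrite !mulmxA.
have moment_Si : L *m M ^+ i.+1 *m V = ctr X *m Wn *m En.
  by rewrite -[RHS]mulmxA -WEn exprSr -mulmxE /Mmx !mulmxA LMi_invZ.
by rewrite moment_Si moment_i /Mn [RHS]mulmxA mulmxK.
Qed.

Lemma moment_identity_of_symmetrizer : moment_identity E A L V s0 j.
Proof.
elim=> [|i IHi] lt_ij; first by rewrite !expr0 !mulmx1.
by rewrite moment_step // IHi 1?ltnW // exprSr -mulmxE mulmxA.
Qed.

End Symmetrizer.

Section KrylovSpan.
Variables (C : numClosedFieldType) (K m : nat) (E A : 'M[C]_K) (B : 'M[C]_(K, m)).
Variable s0 : C.

Local Notation defl_step := (defl_step E A B s0).
Local Notation kv := (kv E A B s0).
Local Notation span_upto := (span_upto E A B s0).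

Lemma submx_foldl_defl_step k (ls : seq 'I_m) S :
  (S <= foldl (defl_step k) S ls)%MS.
Proof.
elim: ls S => [|l ls IHls] S /=; first exact: submx_refl.
apply: submx_trans (IHls _); rewrite /defl_step.
by case: ifP => _; [exact: submx_refl | exact: addsmxSl].
Qed.

Lemma kv_sub_foldl_defl_step k (ls : seq 'I_m) S l :
  l \in ls -> (kv k l <= foldl (defl_step k) S ls)%MS.
Proof.
elim: ls S => [|l' ls IHls] S //=; rewrite inE => /predU1P[->|/IHls //].
apply: submx_trans (submx_foldl_defl_step _ _ _); rewrite /defl_step.
by case: ifP => // _; exact: addsmxSr.
Qed.

Lemma span_upto_mono : {homo span_upto : k j / (k <= j)%N >-> (k <= j)%MS}.
Proof.
apply: homo_leq => [S|S1 S2 S3|k]; [exact: submx_refl | exact: submx_trans |].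
exact: submx_foldl_defl_step.
Qed.

Lemma kv_sub_span_upto k l j : (k < j)%N -> (kv k l <= span_upto j)%MS.
Proof.
move=> /span_upto_mono; apply: submx_trans.
by apply: kv_sub_foldl_defl_step; rewrite mem_enum.
Qed.

Lemma krylov_block_range q (Vt : 'M[C]_(q, K)) j k :
  (krylov_row_space E A B s0 j <= Vt)%MS -> (k < j)%N ->
  exists X : 'M[C]_(q, m), Mmx E A s0 ^+ k *m Rmx E A B s0 = Vt^T *m X.
Proof.
move=> sub_Vt lt_kj.
have /submxP[X MR_X] : ((Mmx E A s0 ^+ k *m Rmx E A B s0)^T <= Vt)%MS.
  apply/row_subP => l; rewrite -tr_col.
  exact: submx_trans (kv_sub_span_upto l lt_kj) sub_Vt.
by exists X^T; rewrite -[LHS]trmxK MR_X trmx_mul.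
Qed.

End KrylovSpan.

Section SecondOrder.
Variable C : numClosedFieldType.

Definition sigmx n1 n2 : 'M[C]_(n1 + n2) := block_mx 1%:M 0 0 (- 1%:M).

Lemma mul_sigmx_block n1 n2 p1 p2 (Aul : 'M[C]_(n1, p1)) (Aur : 'M[C]_(n1, p2))
    (Adl : 'M[C]_(n2, p1)) (Adr : 'M[C]_(n2, p2)) :
  sigmx n1 n2 *m block_mx Aul Aur Adl Adr = block_mx Aul Aur (- Adl) (- Adr).
Proof. by rewrite mulmx_block !(mul0mx, mul1mx, mulNmx, addr0, add0r). Qed.

Lemma mul_sigmx_col n1 n2 p (A1 : 'M[C]_(n1, p)) (A2 : 'M[C]_(n2, p)) :
  sigmx n1 n2 *m col_mx A1 A2 = col_mx A1 (- A2).
Proof. by rewrite mul_block_col !(mul0mx, mul1mx, mulNmx, addr0, add0r). Qed.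

Lemma ctr_diag_block_conj N1 N2 n1 n2 (V1 : 'M[C]_(N1, n1)) (V2 : 'M[C]_(N2, n2))
    (Aul : 'M[C]_N1) (Aur : 'M[C]_(N1, N2)) (Adl : 'M[C]_(N2, N1)) (Adr : 'M[C]_N2) :
  ctr (block_mx V1 0 0 V2) *m block_mx Aul Aur Adl Adr *m block_mx V1 0 0 V2 =
  block_mx (ctr V1 *m Aul *m V1) (ctr V1 *m Aur *m V2)
           (ctr V2 *m Adl *m V1) (ctr V2 *m Adr *m V2).
Proof.
by rewrite ctr_block_mx !ctr0 !mulmx_block !(mul0mx, mulmx0, addr0, add0r).
Qed.

Lemma second_order_moment_identity N N0 m n (P0 P1 : 'M[C]_N) (F : 'M[C]_(N, N0))
    (G : 'M[C]_N0) (B : 'M[C]_(N, m)) (s0 : C) j (V1 : 'M[C]_(N, n))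
    (V2 : 'M[C]_(N0, n)) :
  let E := block_mx P1 0 0 G in
  let A := block_mx (- P0) (- F) (ctr F) 0 in
  let V := block_mx V1 0 0 V2 in
  P0 = ctr P0 -> P1 = ctr P1 -> G = ctr G ->
  (krylov_row_space E A (col_mx B 0) s0 j <= (col_mx V1 V2)^T)%MS ->
  s0 \is Num.real -> (s0 *: E - A) \in unitmx ->
  (s0 *: (ctr V *m E *m V) - ctr V *m A *m V) \in unitmx ->
  moment_identity E A (row_mx (ctr B) 0) V s0 j.
Proof.
move=> E A V P0_herm P1_herm G_herm sub_V s0_real Z_unit Zn_unit.
apply: (moment_identity_of_symmetrizer (W := sigmx N N0) (B := col_mx B 0)
  (Wn := sigmx n n)) => //; rewrite /E /A /V.
- by rewrite mul_sigmx_block ctr_block_mx !(ctrN, ctr0, oppr0) -P1_herm -G_herm.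
- by rewrite mul_sigmx_block ctr_block_mx !(ctrN, ctrK, ctr0, oppr0, opprK) -P0_herm.
- by rewrite mul_sigmx_col ctr_row_mx ctrK ctr0 oppr0.
- by rewrite !(mul_sigmx_block, ctr_diag_block_conj, mulmxN, mulNmx).
- by rewrite !(mul_sigmx_block, ctr_diag_block_conj, mulmxN, mulNmx).
- move=> i /(krylov_block_range sub_V)[X ->]; exists (col_mx X X).
  by rewrite trmxK mul_block_col mul_col_mx !(mul0mx, addr0, add0r).
Qed.

End SecondOrder.

Section CompanionBlocks.
Variables (C : numClosedFieldType) (l N : nat).

Lemma sum_ord_pick (V : nmodType) (F : nat -> V) c :
  \sum_(r < l) (if r == c :> nat then F r else 0) = if (c < l)%N then F c else 0.
Proof.
case: ltnP => [lt_cl|le_lc].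
  rewrite (bigD1 (Ordinal lt_cl)) //= eqxx big1 ?addr0 // => r.
  by rewrite -val_eqE /= => /negbTE ->.
by rewrite big1 // => r _; case: eqP => // eq_rc; move: (ltn_ord r); rewrite eq_rc ltnNge le_lc.
Qed.

Lemma mul_mxblock_diagl a b c (X : 'M[C]_(a, b)) (B_ : 'I_l -> 'I_l -> 'M[C]_(b, c)) :
  (\mxblock_(i < l, k < l) (if i == k then X else 0)) *m \mxblock_(i < l, k < l) B_ i k =
  \mxblock_(i < l, k < l) (X *m B_ i k).
Proof.
rewrite mul_mxblock; apply/eq_mxblock => i k.
rewrite (bigD1 i) //= eqxx big1 ?addr0 // => r /negbTE.
by rewrite eq_sym => ->; rewrite mul0mx.
Qed.

Lemma mul_mxblock_diagr a b c (Y : 'M[C]_(b, c)) (B_ : 'I_l -> 'I_l -> 'M[C]_(a, b)) :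
  \mxblock_(i < l, k < l) B_ i k *m \mxblock_(i < l, k < l) (if i == k then Y else 0) =
  \mxblock_(i < l, k < l) (B_ i k *m Y).
Proof.
rewrite mul_mxblock; apply/eq_mxblock => i k.
by rewrite (bigD1 k) //= eqxx big1 ?addr0 // => r /negbTE ->; rewrite mulmx0.
Qed.

Lemma companV_congr n (S : 'M[C]_(N, n)) (B_ : 'I_l -> 'I_l -> 'M[C]_N) :
  ctr (companV l S) *m \mxblock_(i < l, k < l) B_ i k *m companV l S =
  \mxblock_(i < l, k < l) (ctr S *m B_ i k *m S).
Proof.
have -> : ctr (companV l S) = \mxblock_(i < l, k < l) (if i == k then ctr S else 0).
  rewrite ctr_mxblock; apply/eq_mxblock => i k.
  by rewrite eq_sym; case: eqP => _; rewrite ?ctr0.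
by rewrite mul_mxblock_diagl mul_mxblock_diagr.
Qed.

Lemma companE_congr n (S : 'M[C]_(N, n)) (Pl : 'M[C]_N) : ctr S *m S = 1%:M ->
  ctr (companV l S) *m companE l Pl *m companV l S = companE l (ctr S *m Pl *m S).
Proof.
move=> S_isometry; rewrite companV_congr; apply/eq_mxblock => i k.
by case: eqP => _; [case: ifP; rewrite ?mulmx1 | rewrite mulmx0 mul0mx].
Qed.

Lemma companA_congr n (S : 'M[C]_(N, n)) (Pk : 'I_l -> 'M[C]_N) : ctr S *m S = 1%:M ->
  ctr (companV l S) *m companA Pk *m companV l S =
  companA (fun k => ctr S *m Pk k *m S).
Proof.
move=> S_isometry; rewrite mulmxN mulNmx companV_congr; congr (- _).
apply/eq_mxblock => i k; case: ifP => // _.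
by case: ifP; rewrite ?(mulmx0, mul0mx, mulmxN, mulNmx, mulmx1, S_isometry).
Qed.

Definition compan_symmetrizer (Q : nat -> 'M[C]_N) : 'M[C]_(\sum_(i < l) N) :=
  \mxblock_(i < l, k < l)
    (if is_last k then (if i == 0 :> nat then 1%:M else 0) else Q (i + k + 1)%N).

Definition hankel_mx (Q : nat -> 'M[C]_N) : 'M[C]_(\sum_(i < l) N) :=
  \mxblock_(i < l, k < l) Q (i + k + 1)%N.

Definition bordered_hankel_mx (Q : nat -> 'M[C]_N) : 'M[C]_(\sum_(i < l) N) :=
  \mxblock_(i < l, k < l)
    (if k == 0 :> nat then (if i == 0 :> nat then - Q 0%N else 0)
     else if i == 0 :> nat then 0 else Q (i + k)%N).

End CompanionBlocks.

Section CompanionSymmetrizer.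
Variables (C : numClosedFieldType) (l N : nat) (Q : nat -> 'M[C]_N).

Local Notation W := (compan_symmetrizer l Q).

Lemma compan_symmetrizerE : (forall r, (l < r)%N -> Q r = 0) ->
  W *m companE l (Q l) = hankel_mx l Q.
Proof.
move=> Q_vanish; rewrite mul_mxblock; apply/eq_mxblock => i k.
pose F r := (if r.+1 == l then (if i == 0 :> nat then 1%:M else 0) else Q (i + r + 1)%N)
            *m (if r.+1 == l then Q l else 1%:M).
transitivity (\sum_(r < l) (if r == k :> nat then F r else 0)).
  apply: eq_bigr => r _; rewrite /F /is_last.
  case: (r =P k) => [->|ne_rk]; first by rewrite eqxx.
  by rewrite mulmx0; case: eqP => // /val_inj.
rewrite sum_ord_pick ltn_ord /F.
case: eqP => [last_k|_]; last by rewrite mulmx1.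
case: eqP => [-> | i_neq0]; first by rewrite mul1mx add0n addn1 last_k.
by rewrite mul0mx Q_vanish //; lia.
Qed.

Lemma compan_symmetrizerA (Pk : 'I_l -> 'M[C]_N) : (forall k, Pk k = Q k) ->
  W *m companA Pk = bordered_hankel_mx l Q.
Proof.
move=> Pk_Q; rewrite mulmxN mul_mxblock -mxblockN; apply/eq_mxblock => i k.
have lt_kl := ltn_ord k.
pose G := if k == 0 :> nat then 0 else Q (i + k)%N.
transitivity (- (\sum_(r < l) (if r == l.-1 :> nat then (if i == 0 :> nat then Q k else 0) else 0)
                - \sum_(r < l) (if r == k.-1 :> nat then G else 0))).
  rewrite -sumrB; congr (- _); apply: eq_bigr => r _; rewrite /is_last Pk_Q.
  have lt_rl := ltn_ord r.
  have [last_r|not_last_r] := eqVneq r.+1 l.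
    have G_r0 : (if r == k.-1 :> nat then G else 0) = 0.
      by rewrite /G; case: (@eqP nat r k.-1) => // ?; case: (@eqP nat k 0) => // ?; lia.
    rewrite G_r0 subr0 (_ : r == l.-1 :> nat); last by apply/eqP; lia.
    by case: (nat_of_ord i == 0)%N; rewrite ?mul1mx ?mul0mx.
  rewrite (_ : r == l.-1 :> nat = false) ?sub0r; last by apply/eqP; lia.
  case: eqP => [k_eq|k_neq]; last first.
    rewrite mulmx0 /G; case: (@eqP nat k 0) => [-> | k_neq0].
      by case: ifP; rewrite oppr0.
    by rewrite (_ : r == k.-1 :> nat = false) ?oppr0 //; apply/eqP; lia.
  rewrite mulmxN mulmx1 (_ : r == k.-1 :> nat); last by apply/eqP; lia.
  by rewrite /G (_ : k == 0 :> nat = false) ?k_eq ?addn1 ?addnS //; apply/eqP; lia.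
have [lt_l1 lt_k1] : (l.-1 < l)%N /\ (k.-1 < l)%N by lia.
rewrite !(sum_ord_pick _ (fun _ => _)) lt_l1 lt_k1 /G.
have [->|_] := eqVneq (nat_of_ord i) 0%N; last by rewrite sub0r opprK.
by have [->|_] := eqVneq (nat_of_ord k) 0%N; rewrite ?subr0 ?add0n ?subrr ?oppr0.
Qed.

Lemma compan_symmetrizerB m (B : 'M[C]_(N, m)) :
  W *m companB l B = \mxcol_(i < l) (if i == 0 :> nat then B else 0).
Proof.
rewrite mul_mxblock_mxrow; apply/eq_mxcol => i.
transitivity (\sum_(r < l) (if r == l.-1 :> nat then
                               (if i == 0 :> nat then B else 0) else 0)).
  apply: eq_bigr => r _; rewrite /is_last; have lt_rl := ltn_ord r.
  have [last_r|not_last_r] := eqVneq r.+1 l.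
    rewrite (_ : r == l.-1 :> nat); last by apply/eqP; lia.
    by case: eqP => _; rewrite ?mul1mx ?mul0mx.
  by rewrite (_ : r == l.-1 :> nat = false) ?mulmx0 //; apply/eqP; lia.
by rewrite (sum_ord_pick _ (fun _ => _)) (_ : l.-1 < l)%N //; move: (ltn_ord i); lia.
Qed.

Lemma hankel_mx_herm : (forall r, ctr (Q r) = Q r) -> ctr (hankel_mx l Q) = hankel_mx l Q.
Proof.
by move=> Q_herm; rewrite ctr_mxblock; apply/eq_mxblock => i k; rewrite Q_herm (addnC k).
Qed.

Lemma bordered_hankel_mx_herm : (forall r, ctr (Q r) = Q r) ->
  ctr (bordered_hankel_mx l Q) = bordered_hankel_mx l Q.
Proof.
move=> Q_herm; rewrite ctr_mxblock; apply/eq_mxblock => i k.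
by do 2!case: eqP => _; rewrite ?ctr0 ?ctrN ?Q_herm // addnC.
Qed.

Lemma hankel_mx_congr n (S : 'M[C]_(N, n)) :
  ctr (companV l S) *m hankel_mx l Q *m companV l S =
  hankel_mx l (fun r => ctr S *m Q r *m S).
Proof. exact: companV_congr. Qed.

Lemma bordered_hankel_mx_congr n (S : 'M[C]_(N, n)) :
  ctr (companV l S) *m bordered_hankel_mx l Q *m companV l S =
  bordered_hankel_mx l (fun r => ctr S *m Q r *m S).
Proof.
rewrite companV_congr; apply/eq_mxblock => i k.
by do 2!case: ifP => _; rewrite ?mulmx0 ?mul0mx ?mulmxN ?mulNmx.
Qed.

End CompanionSymmetrizer.

Lemma higher_order_moment_identity (C : numClosedFieldType) l N m n
    (P : 'I_l.+1 -> 'M[C]_N) (B : 'M[C]_(N, m)) (Ls : 'I_l -> 'M[C]_(m, N))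
    (s0 : C) j (S : 'M[C]_(N, n)) :
  let E := companE l (P ord_max) in
  let A := companA (fun k : 'I_l => P (widen_ord (leqnSn l) k)) in
  let V := companV l S in
  (forall i, P i = ctr (P i)) ->
  (forall k : 'I_l, Ls k = if (k == 0 :> nat)%N then ctr B else 0) ->
  ctr S *m S = 1%:M ->
  (krylov_row_space E A (companB l B) s0 j <= V^T)%MS ->
  s0 \is Num.real -> (s0 *: E - A) \in unitmx ->
  (s0 *: (ctr V *m E *m V) - ctr V *m A *m V) \in unitmx ->
  moment_identity E A (companL Ls) V s0 j.
Proof.
move=> E A V P_herm Ls_def S_isometry sub_V s0_real Z_unit Zn_unit.
pose Q r := if (r <= l)%N then P (inord r) else 0.
pose QS r := ctr S *m Q r *m S.
have Q_vanish r : (l < r)%N -> Q r = 0 by move=> lt_lr; rewrite /Q leqNgt lt_lr.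
have QS_vanish r : (l < r)%N -> QS r = 0.
  by move/Q_vanish; rewrite /QS => ->; rewrite mulmx0 mul0mx.
have Q_herm r : ctr (Q r) = Q r by rewrite /Q; case: ifP; rewrite ?ctr0 // -P_herm.
have E_Q : E = companE l (Q l).
  by rewrite /E /Q leqnn; congr (companE l (P _)); apply: val_inj; rewrite /= inordK.
have A_Q (k : 'I_l) : P (widen_ord (leqnSn l) k) = Q k.
  by rewrite /Q ltnW //; congr P; apply: val_inj; rewrite /= inordK // ltnS ltnW.
apply: (moment_identity_of_symmetrizer (W := compan_symmetrizer l Q)
  (B := companB l B) (Wn := compan_symmetrizer l QS)) => //.
- by rewrite E_Q compan_symmetrizerE // hankel_mx_herm.
- by rewrite (compan_symmetrizerA A_Q) bordered_hankel_mx_herm.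
- rewrite compan_symmetrizerB ctr_mxrow; apply/eq_mxcol => i.
  by rewrite Ls_def; case: ifP; rewrite ?ctrK ?ctr0.
- rewrite E_Q compan_symmetrizerE // hankel_mx_congr companE_congr //.
  by rewrite compan_symmetrizerE.
- have AS_QS (k : 'I_l) : ctr S *m P (widen_ord (leqnSn l) k) *m S = QS k.
    by rewrite A_Q.
  rewrite (compan_symmetrizerA A_Q) bordered_hankel_mx_congr companA_congr //.
  by rewrite (compan_symmetrizerA AS_QS).
- by move=> i /(krylov_block_range sub_V)[X ->]; exists X; rewrite trmxK.
Qed.

Theorem proposition1 (C : numClosedFieldType) :
  (* case (a), P_{-1} = F1 G F2^H *)
  (forall (N N0 m : nat) (P0 P1 : 'M[C]_N) (F1 F2 : 'M[C]_(N, N0)) (G : 'M[C]_N0)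
          (B : 'M[C]_(N, m)) (L : 'M[C]_(m, N)) (D : 'M[C]_m) (s0 : C) (j : nat)
          (V1 : 'M[C]_(N, nblk (block_mx P1 0 0 (ctr G))
                                 (block_mx (- P0) (- (F1 *m G)) (ctr (F2 *m G)) 0)
                                 (col_mx B 0) s0 j))
          (V2 : 'M[C]_(N0, nblk (block_mx P1 0 0 (ctr G))
                                 (block_mx (- P0) (- (F1 *m G)) (ctr (F2 *m G)) 0)
                                 (col_mx B 0) s0 j)),
     let E := block_mx P1 0 0 (ctr G) in
     let A := block_mx (- P0) (- (F1 *m G)) (ctr (F2 *m G)) 0 in
     let Bf := col_mx B (0 : 'M[C]_(N0, m)) in
     let Lf := row_mx L (0 : 'M[C]_(m, N0)) in
     let Vn := block_mx V1 0 0 V2 in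
     L = ctr B -> P0 = ctr P0 -> P1 = ctr P1 -> F1 = F2 -> G = ctr G ->
     ((col_mx V1 V2)^T == krylov_row_space E A Bf s0 j)%MS ->
     (ctr V2 *m G *m V2) \in unitmx ->
     common_hyps E A Bf Vn s0 j ->
     moment_identity E A Lf Vn s0 j) /\
  (* case (a), P_{-1} = F1 G^{-1} F2^H *)
  (forall (N N0 m : nat) (P0 P1 : 'M[C]_N) (F1 F2 : 'M[C]_(N, N0)) (G : 'M[C]_N0)
          (B : 'M[C]_(N, m)) (L : 'M[C]_(m, N)) (D : 'M[C]_m) (s0 : C) (j : nat)
          (V1 : 'M[C]_(N, nblk (block_mx P1 0 0 G)
                                 (block_mx (- P0) (- F1) (ctr F2) 0) (col_mx B 0) s0 j))
          (V2 : 'M[C]_(N0, nblk (block_mx P1 0 0 G)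
                                 (block_mx (- P0) (- F1) (ctr F2) 0) (col_mx B 0) s0 j)),
     let E := block_mx P1 0 0 G in
     let A := block_mx (- P0) (- F1) (ctr F2) 0 in
     let Bf := col_mx B (0 : 'M[C]_(N0, m)) in
     let Lf := row_mx L (0 : 'M[C]_(m, N0)) in
     let Vn := block_mx V1 0 0 V2 in
     G \in unitmx ->
     L = ctr B -> P0 = ctr P0 -> P1 = ctr P1 -> F1 = F2 -> G = ctr G ->
     ((col_mx V1 V2)^T == krylov_row_space E A Bf s0 j)%MS ->
     (ctr V2 *m G *m V2) \in unitmx ->
     common_hyps E A Bf Vn s0 j ->
     moment_identity E A Lf Vn s0 j) /\
  (* case (b), l-th order system in companion form *)
  (forall (l N m : nat) (P : 'I_l.+1 -> 'M[C]_N) (B : 'M[C]_(N, m))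
          (Ls : 'I_l -> 'M[C]_(m, N)) (D : 'M[C]_m) (s0 : C) (j : nat)
          (S : 'M[C]_(N, nblk (companE l (P ord_max))
                                (companA (fun k : 'I_l => P (widen_ord (leqnSn l) k)))
                                (companB l B) s0 j)),
     let E := companE l (P ord_max) in
     let A := companA (fun k : 'I_l => P (widen_ord (leqnSn l) k)) in
     let Bf := companB l B in
     let Lf := companL Ls in
     let Vn := companV l S in
     (1 <= l)%N ->
     (forall i, P i = ctr (P i)) ->
     (forall k : 'I_l, Ls k = if (k == 0 :> nat)%N then ctr B else 0) ->
     ctr S *m S = 1%:M ->
     (krylov_row_space E A Bf s0 j <= Vn^T)%MS ->
     common_hyps E A Bf Vn s0 j ->
     moment_identity E A Lf Vn s0 j).
Proof.
split; [|split].
- move=> N N0 m P0 P1 F1 F2 G B L _ s0 j V1 V2 E A Bf Lf Vn L_def P0_herm P1_herm F12 G_herm.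
  move=> /andP[_ sub_V] _ [s0_real [_ [Z_unit [_ [_ [_ Zn_unit]]]]]].
  subst L F2; apply: second_order_moment_identity => //.
  by rewrite ctrK -G_herm.
- move=> N N0 m P0 P1 F1 F2 G B L _ s0 j V1 V2 E A Bf Lf Vn _ L_def P0_herm P1_herm F12.
  move=> G_herm /andP[_ sub_V] _ [s0_real [_ [Z_unit [_ [_ [_ Zn_unit]]]]]].
  by subst L F2; apply: second_order_moment_identity.
- move=> l N m P B Ls _ s0 j S E A Bf Lf Vn _ P_herm Ls_def S_isometry sub_V.
  move=> [s0_real [_ [Z_unit [_ [_ [_ Zn_unit]]]]]].
  exact: higher_order_moment_identity.
Qed.
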